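(* Let $\mathcal{H}$ be a complex Hilbert space and let $A\in\mathcal{B}(\mathcal{H})$ be a positive operator with $\dim R(A)\ge 2$. Let $T,S\in\mathcal{B}_A(\mathcal{H})$ and $q\in\mathbb{C}$ with $0<|q|\le 1$. Then \[ |q|^2\,w_{q,A}(TS)\le 4\,w_{q,A}(T)\,w_{q,A}(S). \]
   Context: $A$ induces the semi-inner product $\langle x,y\rangle_A=\langle Ax,y\rangle$ and seminorm $\|x\|_A=\sqrt{\langle x,x\rangle_A}$. $\mathcal{B}_A(\mathcal{H})$ is the set of operators $T$ admitting an $A$-adjoint, i.e. an operator $W$ with $\langle Tx,y\rangle_A=\langle x,Wy\rangle_A$ for all $x,y$. The $A$-$q$-numerical radius is $w_{q,A}(T)=\sup\{|\langle Tx,y\rangle_A| : \|x\|_A=\|y\|_A=1,\ \langle x,y\rangle_A=q\}$. *)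

From HB Require Import structures.
From mathcomp Require Import all_boot all_order all_algebra.
From mathcomp Require Import boolp classical_sets reals ereal.
From mathcomp Require Export complex.

Set Implicit Arguments.
Unset Strict Implicit.
Unset Printing Implicit Defensive.

Import Order.TTheory GRing.Theory Num.Theory.
Local Open Scope ring_scope.
Local Open Scope classical_set_scope.

Section Hilbert.
Variable R : realType.
Local Notation C := R[i].
Variable V : lmodType C.
Variable ip : V -> V -> C.

Definition is_inner_product : Prop :=
  [/\ (forall (a : C) (x y z : V), ip (a *: x + y) z = a * ip x z + ip y z),
      (forall x y : V, ip x y = Num.conj (ip y x)),
      (forall x : V, 0 <= ip x x) &
      (forall x : V, ip x x = 0 -> x = 0)].

Definition hnorm (x : V) : R := Num.sqrt (@complex.Re R (ip x x)).

Definition hcomplete : Prop :=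
  forall u : nat -> V,
    (forall e : R, 0 < e -> exists N : nat, forall m n : nat,
        (N <= m)%N -> (N <= n)%N -> hnorm (u m - u n) < e) ->
    exists l : V, forall e : R, 0 < e -> exists N : nat, forall n : nat,
        (N <= n)%N -> hnorm (u n - l) < e.

Definition is_complex_Hilbert_space : Prop := is_inner_product /\ hcomplete.

Definition bounded_operator (T : V -> V) : Prop :=
  (forall (a : C) (x y : V), T (a *: x + y) = a *: T x + T y) /\
  exists M : R, forall x : V, hnorm (T x) <= M * hnorm x.

Definition positive_operator (A : V -> V) : Prop :=
  bounded_operator A /\ forall x : V, 0 <= ip (A x) x.

(* dim R(A) >= 2: the range of A contains two linearly independent vectors *)
Definition range_dim_ge2 (A : V -> V) : Prop :=
  exists x y : V, forall a b : C,
    a *: A x + b *: A y = 0 -> a = 0 /\ b = 0.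

Definition ipA (A : V -> V) (x y : V) : C := ip (A x) y.
Definition normA (A : V -> V) (x : V) : R := Num.sqrt (@complex.Re R (ipA A x x)).

Definition has_A_adjoint (A T : V -> V) : Prop :=
  bounded_operator T /\
  exists W : V -> V, bounded_operator W /\
    forall x y : V, ipA A (T x) y = ipA A x (W y).

Definition wqA (A : V -> V) (q : C) (T : V -> V) : \bar R :=
  ereal_sup [set r : \bar R | exists x y : V,
     [/\ normA A x = 1, normA A y = 1, ipA A x y = q &
         r = (@complex.Re R `|ipA A (T x) y|)%:E]].

End Hilbert.

(* The A-semi-inner product is a positive semidefinite hermitian form, so it
   obeys Cauchy-Schwarz.  Let t bound |<Tx, y>_A| over the q-admissible pairs.
   As dim R(A) >= 2, every A-unit vector v has an A-orthogonal A-unit vector u,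
   and y = q^* v +- sqrt(1 - |q|^2) u are admissible with x = v; this gives
   |q| |<Tv, v>_A| <= t ||v||_A^2, and polarization upgrades it to
   |q| |<Tz, y>_A| <= 2t for all A-unit z, y.  Hence |q| ||Sx||_A <= 2 w(S)
   and, through the A-adjoint W of T, |q| ||Wy||_A <= 2 w(T); Cauchy-Schwarz
   applied to <TSx, y>_A = <Sx, Wy>_A gives the theorem. *)

From HB Require Import structures.
From mathcomp Require Import all_boot all_order all_algebra.
From mathcomp Require Import reals ereal complex.
From mathcomp Require Import ring lra.

Set Implicit Arguments.
Unset Strict Implicit.
Unset Printing Implicit Defensive.

Import Order.TTheory GRing.Theory Num.Theory.
Local Open Scope complex_scope.
Local Open Scope ring_scope.

Import Normc.

Section Modulus.
Variable R : realType.
Implicit Types (z : R[i]) (r : R).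

Lemma normcE z : `|z| = (normc z)%:C.
Proof. by case: z. Qed.

Lemma normc_ge0 z : 0 <= normc z.
Proof. by rewrite -ler0c -normcE. Qed.

Lemma normc_gt0 z : (0 < `|z|) = (0 < normc z).
Proof. by rewrite normcE ltcE /= eqxx. Qed.

Lemma normc_le1 z : (`|z| <= 1) = (normc z <= 1).
Proof. by rewrite normcE lecE /= eqxx. Qed.

Lemma conjC_real r : (r%:C)^* = r%:C.
Proof. exact: conjc_real. Qed.

Lemma normc_real r : 0 <= r -> normc r%:C = r.
Proof. by move=> r0; apply: complexI; rewrite -normcE ger0_norm ?ler0c. Qed.

Lemma normc_sqr z : (normc z ^+ 2)%:C = z * z^*.
Proof. by rewrite rmorphXn /= -normcE normCK. Qed.

End Modulus.

Lemma discriminant_le (R : realFieldType) (a b c : R) : 0 <= a ->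
  (forall t, 0 <= a * t ^+ 2 - 2 * b * t + c) -> b ^+ 2 <= a * c.
Proof.
move=> a_ge0 quad_ge0; have c_ge0 : 0 <= c by have := quad_ge0 0; lra.
have [a0|a_gt0] := eqVneq a 0.
  have [->|b_neq0] := eqVneq b 0; first by rewrite expr0n mulr_ge0.
  have := quad_ge0 ((c + 1) / (2 * b)).
  have -> : a * ((c + 1) / (2 * b)) ^+ 2 - 2 * b * ((c + 1) / (2 * b)) + c = -1.
    by rewrite a0; field; rewrite b_neq0.
  lra.
have {a_gt0}a_gt0 : 0 < a by rewrite lt0r a_gt0.
have := quad_ge0 (b / a).
have -> : a * (b / a) ^+ 2 - 2 * b * (b / a) + c = c - b ^+ 2 / a.
  by field; rewrite gt_eqF.
by rewrite subr_ge0 ler_pdivrMr // mulrC.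
Qed.

Section Sesquilinear.
Variables (R : realType) (V : lmodType R[i]) (g : V -> V -> R[i]).
Hypothesis gDl : forall a x y z, g (a *: x + y) z = a * g x z + g y z.
Hypothesis gDr : forall a x y z, g x (a *: y + z) = a^* * g x y + g x z.

Lemma sesqZl a x z : g (a *: x) z = a * g x z.
Proof.
have g0l : g 0 z = 0.
  have := gDl 1 0 0 z; rewrite scaler0 addr0 mul1r => g0_twice.
  by apply: (addrI (g 0 z)); rewrite addr0 -g0_twice.
by rewrite -[a *: x]addr0 gDl g0l addr0.
Qed.

Lemma sesqZr a x y : g x (a *: y) = a^* * g x y.
Proof.
have g0r : g x 0 = 0.
  have := gDr 1 x 0 0; rewrite scaler0 addr0 conjC1 mul1r => g0_twice.
  by apply: (addrI (g x 0)); rewrite addr0 -g0_twice.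
by rewrite -[a *: y]addr0 gDr g0r addr0.
Qed.

Lemma sesq_expand a x y :
  g (a *: x + y) (a *: x + y) = a * a^* * g x x + a * g x y + a^* * g y x + g y y.
Proof. by rewrite gDl !gDr; ring. Qed.

Lemma sesq_polarization z y :
  4 * g z y = g (1 *: y + z) (1 *: y + z) + 'i * g ('i *: y + z) ('i *: y + z)
              - g ((-1) *: y + z) ((-1) *: y + z) - 'i * g ((- 'i) *: y + z) ((- 'i) *: y + z).
Proof.
rewrite !sesq_expand !rmorphN /= conjCi conjC1 opprK.
have ii : 'i * 'i = -1 :> R[i] by rewrite -expr2 sqrCi.
apply/eqP; rewrite -subr_eq0; apply/eqP.
transitivity (2 * ('i * 'i + 1) * (g z y - g y z)); first ring.
by rewrite ii addNr mulr0 mul0r.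
Qed.

Lemma sesq_parallelogram z y :
  g (1 *: y + z) (1 *: y + z) + g ('i *: y + z) ('i *: y + z)
  + g ((-1) *: y + z) ((-1) *: y + z) + g ((- 'i) *: y + z) ((- 'i) *: y + z)
  = 4 * g y y + 4 * g z z.
Proof.
rewrite !sesq_expand !rmorphN /= conjCi conjC1 opprK.
have ii : 'i * 'i = -1 :> R[i] by rewrite -expr2 sqrCi.
apply/eqP; rewrite -subr_eq0; apply/eqP.
transitivity (- 2 * ('i * 'i + 1) * g y y); first ring.
by rewrite ii addNr mulr0 mul0r.
Qed.

End Sesquilinear.

Section SemiInnerProduct.
Variables (R : realType) (V : lmodType R[i]) (f : V -> V -> R[i]).
Hypothesis fDl : forall a x y z, f (a *: x + y) z = a * f x z + f y z.
Hypothesis fDr : forall a x y z, f x (a *: y + z) = a^* * f x y + f x z.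
Hypothesis f_ge0 : forall x, 0 <= f x x.

Let fZl := sesqZl fDl.
Let fZr := sesqZr fDr.
Let f_expand := sesq_expand fDl fDr.

Lemma semi_inner_conj x y : f x y = (f y x)^*.
Proof.
have real v : (f v v)^* = f v v by rewrite geC0_conj.
have sum_real : (f x y + f y x)^* = f x y + f y x.
  have -> : f x y + f y x = f (1 *: x + y) (1 *: x + y) - f x x - f y y.
    by rewrite f_expand conjC1; ring.
  by rewrite !rmorphB /= !real.
have diff_imag : ('i * (f x y - f y x))^* = 'i * (f x y - f y x).
  have -> : 'i * (f x y - f y x) = f ('i *: x + y) ('i *: x + y) - f x x - f y y.
    have ii : 'i * 'i^* = 1 :> R[i] by rewrite conjCi mulrN -expr2 sqrCi opprK.
    by rewrite f_expand ii conjCi; ring.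
  by rewrite !rmorphB /= !real.
have {}diff_imag : f x y - f y x = (f y x)^* - (f x y)^*.
  apply: (mulfI (neq0Ci R[i])); rewrite -diff_imag rmorphM rmorphB /= conjCi.
  ring.
have two_neq0 : 2 != 0 :> R[i] by rewrite pnatr_eq0.
apply: (mulfI two_neq0).
transitivity ((f x y + f y x) + (f x y - f y x)); first ring.
by rewrite -sum_real diff_imag rmorphD /=; ring.
Qed.

Definition sqnorm x : R := complex.Re (f x x).

Lemma sqnormE x : f x x = (sqnorm x)%:C.
Proof. by rewrite /sqnorm RRe_real // ger0_real. Qed.

Lemma sqnorm_ge0 x : 0 <= sqnorm x.
Proof. by rewrite -ler0c -sqnormE. Qed.

Lemma sqrt_sqnorm_eq1 x : Num.sqrt (sqnorm x) = 1 <-> f x x = 1.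
Proof.
split => [sqrt1|x1]; last by rewrite /sqnorm x1 sqrtr1.
by rewrite sqnormE -(sqr_sqrtr (sqnorm_ge0 x)) sqrt1 expr1n.
Qed.

Lemma cauchy_schwarz_sqr x y : normc (f x y) ^+ 2 <= sqnorm x * sqnorm y.
Proof.
set n := normc (f x y).
have [n0|n_neq0] := eqVneq n 0.
  by rewrite n0 expr0n mulr_ge0 ?sqnorm_ge0.
have n2_gt0 : 0 < n ^+ 2 by rewrite exprn_gt0 // lt0r n_neq0 normc_ge0.
have n2E : (n ^+ 2)%:C = f x y * (f x y)^* by exact: normc_sqr.
have quad_ge0 t : 0 <= n ^+ 2 * sqnorm y * t ^+ 2 - 2 * n ^+ 2 * t + sqnorm x.
  pose w := (- (t%:C * f x y)) *: y + x.
  rewrite -ler0c; suff -> : (n ^+ 2 * sqnorm y * t ^+ 2 - 2 * n ^+ 2 * t + sqnorm x)%:C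
      = f w w by [].
  rewrite f_expand (semi_inner_conj y x) !sqnormE rmorphN rmorphM /= conjC_real.
  transitivity ((t ^+ 2 * sqnorm y)%:C * (n ^+ 2)%:C - (2 * t)%:C * (n ^+ 2)%:C
                + (sqnorm x)%:C).
    by rewrite -!rmorphM -rmorphB -rmorphD; congr _%:C; ring.
  by rewrite n2E !rmorphM rmorph_nat /=; ring.
have := discriminant_le (mulr_ge0 (ltW n2_gt0) (sqnorm_ge0 y)) quad_ge0.
nra.
Qed.

Lemma cauchy_schwarz x y :
  normc (f x y) <= Num.sqrt (sqnorm x) * Num.sqrt (sqnorm y).
Proof.
rewrite -sqrtrM ?sqnorm_ge0 // -(ger0_norm (normc_ge0 (f x y))) -sqrtr_sqr.
by rewrite ler_sqrt ?mulr_ge0 ?sqnorm_ge0 // cauchy_schwarz_sqr.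
Qed.

Lemma sqnorm0_l x z : sqnorm x = 0 -> f x z = 0.
Proof.
move=> x0; apply: eq0_normc; apply/eqP; rewrite eq_le normc_ge0 andbT.
by have := cauchy_schwarz x z; rewrite x0 sqrtr0 mul0r.
Qed.

Lemma sqnorm0_r x z : sqnorm x = 0 -> f z x = 0.
Proof. by move=> x0; rewrite semi_inner_conj sqnorm0_l // conjC0. Qed.

Definition normalize x := ((Num.sqrt (sqnorm x))^-1)%:C *: x.

Lemma normalize_l x : 0 < sqnorm x -> f (normalize x) x = (Num.sqrt (sqnorm x))%:C.
Proof.
move=> x_gt0; rewrite fZl sqnormE -rmorphM /=; congr _%:C.
rewrite -{2}(sqr_sqrtr (ltW x_gt0)).
by field; rewrite gt_eqF // sqrtr_gt0.
Qed.

Lemma normalize_r x : 0 < sqnorm x -> f x (normalize x) = (Num.sqrt (sqnorm x))%:C.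
Proof.
by move=> x_gt0; rewrite fZr conjC_real -fZl normalize_l.
Qed.

Lemma normalize_unit x : 0 < sqnorm x -> f (normalize x) (normalize x) = 1.
Proof.
move=> x_gt0; rewrite fZl normalize_r // -rmorphM /= mulVf //.
by rewrite gt_eqF // sqrtr_gt0.
Qed.

Lemma linear_compDl (T : V -> V) : linear T ->
  forall a x y z, f (T (a *: x + y)) z = a * f (T x) z + f (T y) z.
Proof. by move=> T_lin a x y z; rewrite T_lin fDl. Qed.

Variable q : R[i].
Hypothesis q_le1 : normc q <= 1.
Hypothesis unit_orthogonal :
  forall v, f v v = 1 -> exists2 u, f u u = 1 & f v u = 0.

Definition qbounded (T : V -> V) (t : R) :=
  forall x y, f x x = 1 -> f y y = 1 -> f x y = q -> normc (f (T x) y) <= t.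

Section QBounded.
Variables (T : V -> V) (t : R).
Hypotheses (T_lin : linear T) (T_qbounded : qbounded T t).

Let fT_Zl := @sesqZl R V (fun u => f (T u)) (linear_compDl T_lin).
Let fT_polarization :=
  @sesq_polarization R V (fun u => f (T u)) (linear_compDl T_lin)
    (fun a x => fDr a (T x)).

(* [y := q^* v + r u] with [r^2 = 1 - |q|^2] satisfies [<v, y> = q] for both signs of [r]; averaging the two bounds kills the [u]-component. *)
Lemma qbounded_diag v : f v v = 1 -> normc q * normc (f (T v) v) <= t.
Proof.
move=> v1; have [u u1 vu0] := unit_orthogonal v1.
have uv0 : f u v = 0 by rewrite semi_inner_conj vu0 conjC0.
set r := Num.sqrt (1 - normc q ^+ 2).
have r2 : r ^+ 2 = 1 - normc q ^+ 2.
  by rewrite sqr_sqrtr // subr_ge0 expr_le1 // normc_ge0.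
have bound (s : R) : s ^+ 2 = r ^+ 2 ->
    normc (q * f (T v) v + s%:C * f (T v) u) <= t.
  move=> s2; pose y := q^* *: v + s%:C *: u.
  have vy : f v y = q by rewrite fDr fZr conjCK conjC_real v1 vu0 mulr0 mulr1 addr0.
  have y1 : f y y = 1.
    rewrite f_expand !fZr !fZl conjCK conjC_real v1 u1 vu0 uv0 !mulr0 !addr0.
    rewrite !mulr1 mulrC -normc_sqr -rmorphM -rmorphD /= -expr2 s2 r2 subrKC.
    exact: rmorph1.
  have Tvy : f (T v) y = q * f (T v) v + s%:C * f (T v) u.
    by rewrite fDr !fZr conjCK conjC_real.
  by rewrite -Tvy; apply: T_qbounded.
have := lerD (bound r erefl) (bound (- r) (sqrrN r)).
rewrite rmorphN mulNr => /(le_trans (le_normcD _ _)).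
rewrite addrACA subrr addr0 -mulr2n normcMn normcM.
lra.
Qed.

Lemma qbounded_ge0 v : f v v = 1 -> 0 <= t.
Proof.
by move=> v1; apply: le_trans (qbounded_diag v1); rewrite mulr_ge0 ?normc_ge0.
Qed.

Lemma qbounded_diag_scaled v : normc q * normc (f (T v) v) <= t * sqnorm v.
Proof.
move: (sqnorm_ge0 v); rewrite le0r => /predU1P[v0|v_gt0].
  by rewrite sqnorm0_r // v0 normc_real // !mulr0.
have := qbounded_diag (normalize_unit v_gt0).
rewrite /normalize; set k := (Num.sqrt (sqnorm v))^-1.
rewrite fT_Zl fZr conjC_real mulrA -rmorphM normcM normc_real; last first.
  by rewrite mulr_ge0 // invr_ge0 sqrtr_ge0.
have kkP : k * k * sqnorm v = 1.
  by rewrite -expr2 exprVn sqr_sqrtr ?mulVf ?gt_eqF // ltW.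
move=> normalized_bound; rewrite -[X in X <= _]mulr1 -kkP.
have -> : normc q * normc (f (T v) v) * (k * k * sqnorm v)
          = normc q * (k * k * normc (f (T v) v)) * sqnorm v by ring.
by rewrite ler_wpM2r // sqnorm_ge0.
Qed.

Lemma qbounded_polar z y : f z z = 1 -> f y y = 1 ->
  normc q * normc (f (T z) y) <= 2 * t.
Proof.
move=> z1 y1; have := fT_polarization z y.
have := sesq_parallelogram fDl fDr z y; rewrite z1 y1 => parallelogram.
set v1 := 1 *: y + z; set v2 := 'i *: y + z.
set v3 := (-1) *: y + z; set v4 := (- 'i) *: y + z => /= polarization.
have sum8 : sqnorm v1 + sqnorm v2 + sqnorm v3 + sqnorm v4 = 8.
  apply: complexI; rewrite rmorph_nat !rmorphD /= -!sqnormE parallelogram.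
  by rewrite !mulr1 -natrD.
have normci : normc ('i : R[i]) = 1 by apply: complexI; rewrite -normcE normCi.
have tri : 4 * normc (f (T z) y) <= normc (f (T v1) v1) + normc (f (T v2) v2)
                                  + normc (f (T v3) v3) + normc (f (T v4) v4).
  rewrite -[4]normc_real ?ler0n // -normcM rmorph_nat polarization.
  apply: le_trans (le_normcD _ _) _; rewrite normcN normcM normci mul1r lerD //.
  apply: le_trans (le_normcD _ _) _; rewrite normcN lerD //.
  by apply: le_trans (le_normcD _ _) _; rewrite normcM normci mul1r.
have := ler_wpM2l (normc_ge0 q) tri.
have := qbounded_diag_scaled v1; have := qbounded_diag_scaled v2.
have := qbounded_diag_scaled v3; have := qbounded_diag_scaled v4.
have : t * (sqnorm v1 + sqnorm v2 + sqnorm v3 + sqnorm v4) = t * 8 by rewrite sum8.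
rewrite !mulrDr; lra.
Qed.

Lemma qbounded_image x : f x x = 1 -> normc q * Num.sqrt (sqnorm (T x)) <= 2 * t.
Proof.
move=> x1; move: (sqnorm_ge0 (T x)); rewrite le0r => /predU1P[Tx0|Tx_gt0].
  by rewrite Tx0 sqrtr0 mulr0 mulr_ge0 // (qbounded_ge0 x1).
have := qbounded_polar x1 (normalize_unit Tx_gt0).
by rewrite normalize_r // normc_real // sqrtr_ge0.
Qed.

Lemma qbounded_adjoint_image W y : (forall x y, f (T x) y = f x (W y)) ->
  f y y = 1 -> normc q * Num.sqrt (sqnorm (W y)) <= 2 * t.
Proof.
move=> W_adj y1; move: (sqnorm_ge0 (W y)); rewrite le0r => /predU1P[Wy0|Wy_gt0].
  by rewrite Wy0 sqrtr0 mulr0 mulr_ge0 // (qbounded_ge0 y1).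
have := qbounded_polar (normalize_unit Wy_gt0) y1.
by rewrite W_adj normalize_l // normc_real // sqrtr_ge0.
Qed.

End QBounded.

End SemiInnerProduct.

Lemma lee_fin_mul_ub (R : realFieldType) (k r : R) (w : \bar R) : 0 < k ->
  (forall t, (w <= t%:E)%E -> r <= k * t) -> (r%:E <= k%:E * w)%E.
Proof.
move=> k_gt0; case: w => [t| |] ub.
- by rewrite -EFinM lee_fin ub.
- by rewrite gt0_muley ?leey ?lte_fin.
- have := ub (r / k - 1) (leNye _).
  by rewrite mulrBr mulr1 mulrCA mulfV ?gt_eqF // mulr1 => contra; exfalso; lra.
Qed.

Section OperatorSemiInnerProduct.
Variables (R : realType) (V : lmodType R[i]) (ip : V -> V -> R[i]) (A : V -> V).
Hypotheses (ip_inner : is_inner_product ip) (A_lin : linear A).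
Hypothesis A_ge0 : forall x, 0 <= ip (A x) x.

Local Notation f := (ipA ip A).

Lemma ipA_Dl a x y z : f (a *: x + y) z = a * f x z + f y z.
Proof. by case: ip_inner => ipDl _ _ _; rewrite /ipA A_lin ipDl. Qed.

Lemma ipA_Dr a x y z : f x (a *: y + z) = a^* * f x y + f x z.
Proof.
case: ip_inner => ipDl ipC _ _.
by rewrite /ipA ipC ipDl rmorphD rmorphM /= -!ipC.
Qed.

Let f_ge0 : forall x, 0 <= f x x := A_ge0.

Lemma ipA_sqnorm0 x : sqnorm f x = 0 -> A x = 0.
Proof.
case: ip_inner => _ _ _ ip_def x0; apply: ip_def.
exact: (sqnorm0_l ipA_Dl ipA_Dr f_ge0 _ x0).
Qed.

Lemma orthogonal_or_collinear v w : f v v = 1 ->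
  (exists2 u, f u u = 1 & f v u = 0) \/ A w = f w v *: A v.
Proof.
move=> v1; pose w' := (- f w v) *: v + w.
have w'v : f w' v = 0 by rewrite ipA_Dl v1 mulr1 addNr.
move: (sqnorm_ge0 f_ge0 w'); rewrite le0r => /predU1P[w'0|w'_gt0].
  right; apply/eqP; rewrite -subr_eq0 addrC -scaleNr -A_lin.
  by rewrite (ipA_sqnorm0 w'0).
left; exists (normalize f w'); first exact: normalize_unit ipA_Dl ipA_Dr f_ge0 _ w'_gt0.
by rewrite (sesqZr ipA_Dr) (semi_inner_conj ipA_Dl ipA_Dr f_ge0 v) w'v conjC0 mulr0.
Qed.

Lemma ipA_unit_orthogonal : range_dim_ge2 A ->
  forall v, f v v = 1 -> exists2 u, f u u = 1 & f v u = 0.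
Proof.
case=> x0 [y0 indep] v v1.
case: (orthogonal_or_collinear y0 v1) => [//|Ay0].
case: (orthogonal_or_collinear x0 v1) => [//|Ax0].
have [_ x0v0] : f y0 v = 0 /\ - f x0 v = 0.
  by apply: indep; rewrite Ax0 Ay0 !scalerA mulNr scaleNr mulrC subrr.
have x0v : f x0 v = 0 by apply/eqP; rewrite -oppr_eq0 x0v0.
have := indep 1 0; rewrite Ax0 x0v !scale0r scaler0 addr0 => /(_ erefl) [/eqP].
by rewrite oner_eq0.
Qed.

Lemma normA_eq1 x : normA ip A x = 1 <-> f x x = 1.
Proof. exact: sqrt_sqnorm_eq1 f_ge0 x. Qed.

Variable q : R[i].

Lemma wqA_ub U x y : f x x = 1 -> f y y = 1 -> f x y = q ->
  ((normc (f (U x) y))%:E <= wqA ip A q U)%E.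
Proof.
move=> x1 y1 xyq; apply: ereal_sup_ubound; exists x, y.
by split => //; apply/normA_eq1.
Qed.

Lemma wqA_qbounded U t : (wqA ip A q U <= t%:E)%E -> qbounded f q U t.
Proof.
by move=> le_t x y x1 y1 xyq; rewrite -lee_fin (le_trans (wqA_ub U x1 y1 xyq)).
Qed.

Hypotheses (q_le1 : normc q <= 1) (A_rank : range_dim_ge2 A).

Let unit_orthogonal := ipA_unit_orthogonal A_rank.

Lemma wqA_image S x : linear S -> f x x = 1 ->
  ((normc q * Num.sqrt (sqnorm f (S x)))%:E <= 2%:E * wqA ip A q S)%E.
Proof.
move=> S_lin x1; apply: lee_fin_mul_ub => // s /wqA_qbounded S_s.
exact: (qbounded_image ipA_Dl ipA_Dr f_ge0 q_le1 unit_orthogonal S_lin S_s x1).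
Qed.

Lemma wqA_adjoint_image T W y : linear T -> (forall x y, f (T x) y = f x (W y)) ->
  f y y = 1 -> ((normc q * Num.sqrt (sqnorm f (W y)))%:E <= 2%:E * wqA ip A q T)%E.
Proof.
move=> T_lin W_adj y1; apply: lee_fin_mul_ub => // t /wqA_qbounded T_t.
exact: (qbounded_adjoint_image ipA_Dl ipA_Dr f_ge0 q_le1 unit_orthogonal
          T_lin T_t W_adj y1).
Qed.

Lemma wqA_comp_le T S W : linear T -> linear S ->
  (forall x y, f (T x) y = f x (W y)) -> 0 < normc q ->
  ((normc q ^+ 2)%:E * wqA ip A q (T \o S)
    <= 4%:E * wqA ip A q T * wqA ip A q S)%E.
Proof.
move=> T_lin S_lin W_adj q_gt0; have q2_gt0 : 0 < normc q ^+ 2 by rewrite exprn_gt0.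
rewrite -lee_pdivlMl //; apply: ge_ereal_sup => _ [x [y [x1 y1 xyq ->]]].
move/normA_eq1 in x1; move/normA_eq1 in y1; rewrite lee_pdivlMl //.
set a := normc q * Num.sqrt (sqnorm f (S x)).
set b := normc q * Num.sqrt (sqnorm f (W y)).
have TSxy : normc q ^+ 2 * normc (f (T (S x)) y) <= b * a.
  have -> : b * a = normc q ^+ 2 * (Num.sqrt (sqnorm f (S x)) * Num.sqrt (sqnorm f (W y))).
    by rewrite /a /b; ring.
  rewrite W_adj; apply: ler_wpM2l; first by rewrite exprn_ge0 ?normc_ge0.
  exact: (cauchy_schwarz ipA_Dl ipA_Dr f_ge0).
apply: le_trans (_ : (b * a)%:E <= _)%E; first by rewrite lee_fin.
rewrite EFinM (_ : 4%:E = 2%:E * 2%:E)%E; last by rewrite -EFinM -natrM.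
rewrite -muleA muleACA.
apply: lee_pmul; rewrite ?lee_fin ?mulr_ge0 ?normc_ge0 ?sqrtr_ge0 //.
  exact: wqA_adjoint_image.
exact: wqA_image.
Qed.

End OperatorSemiInnerProduct.

Theorem mainTheorem4 (R : realType) (V : lmodType R[i]) (ip : V -> V -> R[i])
    (hH : is_complex_Hilbert_space ip)
    (A : V -> V) (hA : positive_operator ip A) (hdim : range_dim_ge2 A)
    (T S : V -> V) (hT : has_A_adjoint ip A T) (hS : has_A_adjoint ip A S)
    (q : R[i]) (hq0 : 0 < `|q|) (hq1 : `|q| <= 1) :
  (((@complex.Re R `|q|) ^+ 2)%:E * wqA ip A q (T \o S)
    <= (4%:R)%:E * wqA ip A q T * wqA ip A q S)%E.
Proof.
have [ip_inner _] := hH.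
have [[A_lin _] A_ge0] := hA.
have [[T_lin _] [W [_ W_adj]]] := hT.
have [[S_lin _] _] := hS.
rewrite normc_le1 in hq1; rewrite normc_gt0 in hq0.
exact (wqA_comp_le ip_inner A_lin A_ge0 hq1 hdim T_lin S_lin W_adj hq0).
Qed.
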